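(* Let $\Gamma$ be a set of axioms. Then $\mathsf{ICK}\oplus\Gamma$ is sound and complete with respect to the class of general frames that validate $\Gamma$.
   Context: Formulas are generated by $\phi ::= p\mid\bot\mid\phi\wedge\phi\mid\phi\vee\phi\mid\phi\to\phi\mid\phi\mathrel{\Box\!\!\!\rightarrow}\phi$. $\mathsf{ICK}\oplus\Gamma$ is the smallest set of formulas containing intuitionistic propositional logic, $\Gamma$, $(p\mathrel{\Box\!\!\!\rightarrow}(q\wedge r))\leftrightarrow((p\mathrel{\Box\!\!\!\rightarrow} q)\wedge(p\mathrel{\Box\!\!\!\rightarrow} r))$ and $(p\mathrel{\Box\!\!\!\rightarrow}\top)\leftrightarrow\top$, closed under uniform substitution, modus ponens, and the congruence rules for both arguments of $\mathrel{\Box\!\!\!\rightarrow}$. A general frame is $(X,\leq,\mathcal{R},A)$ with $(X,\leq)$ a poset, $A$ a collection of upsets containing $X,\emptyset$ and closed under $\cap,\cup$, $a\to b=\{x\mid{\uparrow}x\cap a\subseteq b\}$ and $a\Rightarrow_c b=\{x\mid R_a[x]\subseteq b\}$, and $\mathcal{R}=\{R_a\mid a\in A\}$ relations with $(\leq\circ R_a)\subseteq(R_a\circ\leq)$. Validity is with respect to valuations into $A$, with $x\models\phi\mathrel{\Box\!\!\!\rightarrow}\psi$ iff every $y$ with $xR_{V(\phi)}y$ satisfies $\psi$. *)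

Inductive form : Type :=
| Var : nat -> form
| Bot : form
| And : form -> form -> form
| Or  : form -> form -> form
| Imp : form -> form -> form
| Cond : form -> form -> form.

Definition Top : form := Imp Bot Bot.
Definition Iff (a b : form) : form := And (Imp a b) (Imp b a).

Fixpoint subst (s : nat -> form) (f : form) : form :=
  match f with
  | Var n => s n
  | Bot => Bot
  | And a b => And (subst s a) (subst s b)
  | Or a b => Or (subst s a) (subst s b)
  | Imp a b => Imp (subst s a) (subst s b)
  | Cond a b => Cond (subst s a) (subst s b)
  end.

Inductive ipc_axiom : form -> Prop :=
| ipc_K  : forall a b, ipc_axiom (Imp a (Imp b a))
| ipc_S  : forall a b c,
    ipc_axiom (Imp (Imp a (Imp b c)) (Imp (Imp a b) (Imp a c)))
| ipc_AndI  : forall a b, ipc_axiom (Imp a (Imp b (And a b)))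
| ipc_AndE1 : forall a b, ipc_axiom (Imp (And a b) a)
| ipc_AndE2 : forall a b, ipc_axiom (Imp (And a b) b)
| ipc_OrI1  : forall a b, ipc_axiom (Imp a (Or a b))
| ipc_OrI2  : forall a b, ipc_axiom (Imp b (Or a b))
| ipc_OrE   : forall a b c,
    ipc_axiom (Imp (Imp a c) (Imp (Imp b c) (Imp (Or a b) c)))
| ipc_Bot   : forall a, ipc_axiom (Imp Bot a).

Definition p0 := Var 0.
Definition p1 := Var 1.
Definition p2 := Var 2.

Inductive ICK (Gamma : form -> Prop) : form -> Prop :=
| ICK_ipc : forall f, ipc_axiom f -> ICK Gamma f
| ICK_Gamma : forall f, Gamma f -> ICK Gamma f
| ICK_C : ICK Gamma (Iff (Cond p0 (And p1 p2)) (And (Cond p0 p1) (Cond p0 p2)))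
| ICK_N : ICK Gamma (Iff (Cond p0 Top) Top)
| ICK_subst : forall s f, ICK Gamma f -> ICK Gamma (subst s f)
| ICK_mp : forall a b, ICK Gamma (Imp a b) -> ICK Gamma a -> ICK Gamma b
| ICK_congL : forall a b c, ICK Gamma (Iff a b) ->
    ICK Gamma (Iff (Cond a c) (Cond b c))
| ICK_congR : forall a b c, ICK Gamma (Iff a b) ->
    ICK Gamma (Iff (Cond c a) (Cond c b)).

Record gframe : Type := {
  W : Type;
  le : W -> W -> Prop;
  adm : (W -> Prop) -> Prop;
  R : (W -> Prop) -> W -> W -> Prop;
  le_refl : forall x, le x x;
  le_trans : forall x y z, le x y -> le y z -> le x z;
  le_antisym : forall x y, le x y -> le y x -> x = y;
  adm_upset : forall a, adm a -> forall x y, le x y -> a x -> a y;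
  adm_full : adm (fun _ => True);
  adm_empty : adm (fun _ => False);
  adm_inter : forall a b, adm a -> adm b -> adm (fun x => a x /\ b x);
  adm_union : forall a b, adm a -> adm b -> adm (fun x => a x \/ b x);
  adm_imp : forall a b, adm a -> adm b ->
     adm (fun x => forall y, le x y -> a y -> b y);
  adm_cond : forall a b, adm a -> adm b ->
     adm (fun x => forall y, R a x y -> b y);
  (* (<= ∘ R_a) ⊆ (R_a ∘ <=), composition read diagrammatically *)
  R_compat : forall a, adm a -> forall x x' y,
     le x x' -> R a x' y -> exists y', R a x y' /\ le y' y
}.

Fixpoint interp (F : gframe) (V : nat -> W F -> Prop) (f : form) : W F -> Prop :=
  match f with
  | Var n => V n
  | Bot => fun _ => False
  | And a b => fun x => interp F V a x /\ interp F V b x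
  | Or a b => fun x => interp F V a x \/ interp F V b x
  | Imp a b => fun x => forall y, le F x y -> interp F V a y -> interp F V b y
  | Cond a b => fun x => forall y, R F (interp F V a) x y -> interp F V b y
  end.

Definition valuation (F : gframe) (V : nat -> W F -> Prop) : Prop :=
  forall n, adm F (V n).

Definition valid (F : gframe) (f : form) : Prop :=
  forall V, valuation F V -> forall x, interp F V f x.

Definition validates (F : gframe) (Gamma : form -> Prop) : Prop :=
  forall f, Gamma f -> valid F f.

(* Soundness: truth sets of formulas are admissible, and the congruence
   rules hold because R_a depends only on the set a, the common truth set of
   provably equivalent formulas.

   Completeness: in the canonical general frame the points are the prime
   theories ordered by inclusion, the admissible sets are those of the form
   {x | c ∈ x}, and x R_a y holds when y contains every d with c □→ d ∈ x for
   every c defining a. A Lindenbaum construction over the countable language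
   separates a theory from an unprovable formula by a prime theory; applied to
   {c | a → c ∈ x} and to {d | c □→ d ∈ x} (a theory thanks to the axioms C
   and N) it gives the truth lemma for → and □→. *)

From Stdlib Require Import Classical ClassicalEpsilon FunctionalExtensionality
  PropExtensionality ProofIrrelevance Lia Cantor.

Section Soundness.

Variable F : gframe.

Lemma interp_adm V : valuation F V -> forall f, adm F (interp F V f).
Proof.
  intros HV f; induction f; simpl.
  - apply HV.
  - apply adm_empty.
  - now apply adm_inter.
  - now apply adm_union.
  - now apply adm_imp.
  - now apply adm_cond.
Qed.

Lemma interp_upset V f x y :
  valuation F V -> le F x y -> interp F V f x -> interp F V f y.
Proof. intros HV; now apply adm_upset, interp_adm. Qed.

Lemma interp_subst V s f :
  interp F V (subst s f) = interp F (fun n => interp F V (s n)) f.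
Proof. induction f; simpl; try rewrite IHf1, IHf2; reflexivity. Qed.

Lemma valid_Iff_interp V a b :
  valid F (Iff a b) -> valuation F V -> interp F V a = interp F V b.
Proof.
  intros Hab HV. extensionality x. apply propositional_extensionality.
  destruct (Hab V HV x) as [Hl Hr].
  split; [apply Hl | apply Hr]; apply le_refl.
Qed.

Lemma ipc_axiom_valid f : ipc_axiom f -> valid F f.
Proof.
  intros Hf V HV x; destruct Hf; simpl.
  - intros y _ Ha z Hyz _. eapply interp_upset; eauto.
  - intros y _ Habc z Hyz Hab w Hzw Ha.
    apply (Habc w (le_trans F _ _ _ Hyz Hzw) Ha w (le_refl F w)).
    now apply Hab.
  - intros y _ Ha z Hyz Hb. split; [eapply interp_upset |]; eauto.
  - now intros y _ [Ha _].
  - now intros y _ [_ Hb].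
  - now left.
  - now right.
  - intros y _ Hac z Hyz Hbc w Hzw [Ha | Hb].
    + exact (Hac w (le_trans F _ _ _ Hyz Hzw) Ha).
    + exact (Hbc w Hzw Hb).
  - now intros y _ [].
Qed.

Lemma ICK_sound Gamma f : ICK Gamma f -> validates F Gamma -> valid F f.
Proof.
  intros Hf HGamma; induction Hf; intros V HV x; simpl.
  - now apply ipc_axiom_valid.
  - now apply HGamma.
  - split.
    + intros y _ H. split; intros z Hz; apply (H z Hz).
    + intros y _ [H1 H2] z Hz. split; auto.
  - split.
    + intros y _ _ z _ [].
    + intros y _ _ z _ w _ [].
  - rewrite interp_subst. apply IHHf.
    intro n; now apply interp_adm.
  - exact (IHHf1 V HV x x (le_refl F x) (IHHf2 V HV x)).
  - rewrite (valid_Iff_interp V a b IHHf HV). split; auto.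
  - rewrite (valid_Iff_interp V a b IHHf HV). split; auto.
Qed.

End Soundness.

#[local] Arguments to_nat : simpl never.

Fixpoint form_code (f : form) : nat :=
  match f with
  | Var n => to_nat (0, n)
  | Bot => to_nat (1, 0)
  | And a b => to_nat (2, to_nat (form_code a, form_code b))
  | Or a b => to_nat (3, to_nat (form_code a, form_code b))
  | Imp a b => to_nat (4, to_nat (form_code a, form_code b))
  | Cond a b => to_nat (5, to_nat (form_code a, form_code b))
  end.

Lemma form_code_inj f g : form_code f = form_code g -> f = g.
Proof.
  revert g; induction f; destruct g; simpl; intro H; apply to_nat_inj in H;
    try discriminate; try reflexivity; injection H as H; subst; auto;
    apply to_nat_inj in H; injection H as H1 H2; f_equal; auto.
Qed.

Definition form_of_nat (n : nat) : form :=
  epsilon (inhabits Bot) (fun f => form_code f = n).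

Lemma form_of_codeK f : form_of_nat (form_code f) = f.
Proof.
  apply form_code_inj.
  apply (epsilon_spec (inhabits Bot) (fun g => form_code g = form_code f)).
  now exists f.
Qed.

Lemma subst_Var f : subst Var f = f.
Proof. induction f; simpl; try rewrite IHf1, IHf2; reflexivity. Qed.

Section Completeness.

Variable Gamma : form -> Prop.

Record theory (T : form -> Prop) : Prop := {
  theory_ICK : forall f, ICK Gamma f -> T f;
  theory_mp : forall a b, T (Imp a b) -> T a -> T b }.

Arguments theory_ICK {T}.
Arguments theory_mp {T}.

Lemma ICK_theory : theory (ICK Gamma).
Proof. split; [auto | apply ICK_mp]. Qed.

Lemma theory_ICK_mp {T} a b : theory T -> ICK Gamma (Imp a b) -> T a -> T b.
Proof. intros HT Hab; now apply (theory_mp HT), (theory_ICK HT). Qed.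

Lemma theory_ICK_mp2 {T} a b c :
  theory T -> ICK Gamma (Imp a (Imp b c)) -> T a -> T b -> T c.
Proof. intros HT Habc Ha; now apply (theory_mp HT), (theory_ICK_mp a). Qed.

Lemma ICK_imp_refl a : ICK Gamma (Imp a a).
Proof.
  apply (theory_ICK_mp2 (Imp a (Imp (Imp a a) a)) (Imp a (Imp a a)) _ ICK_theory);
    apply ICK_ipc; [apply ipc_S | apply ipc_K | apply ipc_K].
Qed.

Lemma theory_And {T} a b : theory T -> T (And a b) <-> T a /\ T b.
Proof.
  intros HT; split.
  - intros Hab; split.
    + exact (theory_ICK_mp _ _ HT (ICK_ipc _ _ (ipc_AndE1 a b)) Hab).
    + exact (theory_ICK_mp _ _ HT (ICK_ipc _ _ (ipc_AndE2 a b)) Hab).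
  - intros [Ha Hb].
    exact (theory_ICK_mp2 a b _ HT (ICK_ipc _ _ (ipc_AndI _ _)) Ha Hb).
Qed.

Lemma theory_Iff {T} a b : theory T -> T (Iff a b) -> T a <-> T b.
Proof.
  intros HT Hab; apply (theory_And _ _ HT) in Hab as [Hl Hr].
  split; now apply (theory_mp HT).
Qed.

Lemma ICK_Iff_intro a b :
  ICK Gamma (Imp a b) -> ICK Gamma (Imp b a) -> ICK Gamma (Iff a b).
Proof. intros; now apply (theory_And _ _ ICK_theory). Qed.

Definition adjoin (T : form -> Prop) (a : form) : form -> Prop :=
  fun c => T (Imp a c).

Lemma adjoin_theory T a : theory T -> theory (adjoin T a).
Proof.
  intros HT; split; unfold adjoin.
  - intros f Hf. apply (theory_ICK_mp f); auto using ICK_ipc, ipc_K.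
    now apply (theory_ICK HT).
  - intros b c Habc Hab.
    apply (theory_ICK_mp2 _ _ _ HT (ICK_ipc _ _ (ipc_S _ _ _)) Habc Hab).
Qed.

Lemma adjoin_self T a : theory T -> adjoin T a a.
Proof. intros HT; apply (theory_ICK HT), ICK_imp_refl. Qed.

Lemma adjoin_incl T a f : theory T -> T f -> adjoin T a f.
Proof. intros HT; apply (theory_ICK_mp _ _ HT), ICK_ipc, ipc_K. Qed.

Record prime_theory : Type := {
  pt_mem :> form -> Prop;
  pt_theory : theory pt_mem;
  pt_consistent : ~ pt_mem Bot;
  pt_prime : forall a b, pt_mem (Or a b) -> pt_mem a \/ pt_mem b }.

Section Lindenbaum.

Variables (T : form -> Prop) (psi : form).
Hypotheses (HT : theory T) (T_psi : ~ T psi).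

Fixpoint lindenbaum_chain (n : nat) : form -> Prop :=
  match n with
  | 0 => T
  | S k =>
      let Tk := lindenbaum_chain k in
      if excluded_middle_informative (adjoin Tk (form_of_nat k) psi)
      then Tk else adjoin Tk (form_of_nat k)
  end.

Lemma lindenbaum_chain_theory n :
  theory (lindenbaum_chain n) /\ ~ lindenbaum_chain n psi.
Proof.
  induction n as [| n [IHth IHpsi]]; simpl; auto.
  destruct excluded_middle_informative; auto using adjoin_theory.
Qed.

Lemma lindenbaum_chain_mono n m f :
  n <= m -> lindenbaum_chain n f -> lindenbaum_chain m f.
Proof.
  induction 1 as [| m _ IH]; auto. intros Hf; simpl.
  destruct excluded_middle_informative; auto.
  apply adjoin_incl; auto. apply lindenbaum_chain_theory.
Qed.

Definition lindenbaum_union (f : form) : Prop := exists n, lindenbaum_chain n f.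

Lemma lindenbaum_union_theory : theory lindenbaum_union.
Proof.
  split.
  - intros f Hf. exists 0. now apply (theory_ICK HT).
  - intros a b [n Hab] [m Ha]. exists (max n m).
    apply (theory_mp (proj1 (lindenbaum_chain_theory (max n m))) a).
    + apply (lindenbaum_chain_mono n); auto; lia.
    + apply (lindenbaum_chain_mono m); auto; lia.
Qed.

Lemma lindenbaum_union_avoids : ~ lindenbaum_union psi.
Proof. intros [n Hn]. now apply (lindenbaum_chain_theory n). Qed.

(* Stage [form_code c] of the chain either refutes [c] or adds it. *)
Lemma lindenbaum_union_refutes c :
  ~ lindenbaum_union c -> lindenbaum_union (Imp c psi).
Proof.
  intros Hc. exists (form_code c).
  apply NNPP; intros Hn. apply Hc. exists (S (form_code c)); simpl.
  rewrite form_of_codeK.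
  destruct excluded_middle_informative as [Hp | _]; [contradiction |].
  apply adjoin_self, lindenbaum_chain_theory.
Qed.

Lemma lindenbaum_prime_theory : prime_theory.
Proof.
  refine {| pt_mem := lindenbaum_union; pt_theory := lindenbaum_union_theory |}.
  - intros Hbot. apply lindenbaum_union_avoids.
    exact (theory_ICK_mp _ _ lindenbaum_union_theory (ICK_ipc _ _ (ipc_Bot _)) Hbot).
  - intros a b Hab. apply NNPP; intros Hn.
    apply not_or_and in Hn as [Ha Hb]. apply lindenbaum_union_avoids.
    apply (theory_mp lindenbaum_union_theory (Or a b)); auto.
    exact (theory_ICK_mp2 _ _ _ lindenbaum_union_theory (ICK_ipc _ _ (ipc_OrE _ _ _))
             (lindenbaum_union_refutes a Ha) (lindenbaum_union_refutes b Hb)).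
Defined.

End Lindenbaum.

Lemma lindenbaum T psi :
  theory T -> ~ T psi -> exists P : prime_theory, (forall f, T f -> P f) /\ ~ P psi.
Proof.
  intros HT Hpsi. exists (lindenbaum_prime_theory T psi HT Hpsi).
  split; [intros f Hf; now exists 0 | apply lindenbaum_union_avoids; auto].
Qed.

Definition pt_incl (x y : prime_theory) : Prop := forall f, x f -> y f.

Lemma pt_incl_antisym x y : pt_incl x y -> pt_incl y x -> x = y.
Proof.
  destruct x as [X HX1 HX2 HX3], y as [Y HY1 HY2 HY3]; unfold pt_incl; simpl.
  intros Hxy Hyx.
  assert (X = Y) as <-.
  { extensionality f; apply propositional_extensionality; split; auto. }
  f_equal; apply proof_irrelevance.
Qed.

Lemma mem_Imp (x : prime_theory) a b :
  x (Imp a b) <-> forall y, pt_incl x y -> y a -> y b.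
Proof.
  split.
  - intros Hab y Hxy Ha. exact (theory_mp (pt_theory y) a b (Hxy _ Hab) Ha).
  - intros H. apply NNPP; intros Hn.
    destruct (lindenbaum (adjoin x a) b (adjoin_theory x a (pt_theory x)) Hn)
      as (P & HP & Pb).
    apply Pb, H.
    + intros f Hf. apply HP, adjoin_incl; auto using pt_theory.
    + apply HP, adjoin_self, pt_theory.
Qed.

Lemma ICK_imp_complete a b :
  (forall P : prime_theory, P a -> P b) -> ICK Gamma (Imp a b).
Proof.
  intros H. apply NNPP; intros Hn.
  destruct (lindenbaum (adjoin (ICK Gamma) a) b (adjoin_theory _ a ICK_theory) Hn)
    as (P & HP & Pb).
  apply Pb, H, HP, adjoin_self, ICK_theory.
Qed.

Definition defines (c : form) (A : prime_theory -> Prop) : Prop :=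
  forall x, A x <-> x c.

Lemma defines_unique c d A : defines c A -> defines d A -> ICK Gamma (Iff c d).
Proof.
  intros Hc Hd. apply ICK_Iff_intro; apply ICK_imp_complete; intros P HP.
  - now apply Hd, Hc.
  - now apply Hc, Hd.
Qed.

Lemma theory_Cond_And T c a b :
  theory T -> T (Cond c (And a b)) <-> T (Cond c a) /\ T (Cond c b).
Proof.
  intros HT. rewrite <- (theory_And _ _ HT).
  apply (theory_Iff _ _ HT), (theory_ICK HT).
  exact (ICK_subst Gamma (fun n => match n with 0 => c | 1 => a | _ => b end) _
           (ICK_C Gamma)).
Qed.

Lemma theory_Cond_Top T c : theory T -> T (Cond c Top).
Proof.
  intros HT. apply (theory_Iff (Cond c Top) Top HT).
  - exact (theory_ICK HT _ (ICK_subst Gamma (fun _ => c) _ (ICK_N Gamma))).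
  - apply (theory_ICK HT), ICK_imp_refl.
Qed.

Lemma theory_Cond_mono T c a b :
  theory T -> ICK Gamma (Imp a b) -> T (Cond c a) -> T (Cond c b).
Proof.
  intros HT Hab Ha.
  assert (Haab : ICK Gamma (Iff a (And a b))).
  { apply ICK_Iff_intro; [| apply ICK_ipc, ipc_AndE1].
    exact (theory_ICK_mp2 _ _ _ ICK_theory (ICK_ipc _ _ (ipc_S _ _ _))
             (ICK_ipc _ _ (ipc_AndI _ _)) Hab). }
  apply (theory_Cond_And T c a b HT).
  apply (theory_Iff _ _ HT (theory_ICK HT _ (ICK_congR Gamma _ _ c Haab))), Ha.
Qed.

Definition cond_section (T : form -> Prop) (c : form) : form -> Prop :=
  fun d => T (Cond c d).

Lemma cond_section_theory T c : theory T -> theory (cond_section T c).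
Proof.
  intros HT; split; unfold cond_section.
  - intros f Hf. apply (theory_Cond_mono T c Top f HT).
    + apply (ICK_mp _ f); [apply ICK_ipc, ipc_K | exact Hf].
    + now apply theory_Cond_Top.
  - intros a b Hab Ha. apply (theory_Cond_mono T c (And (Imp a b) a) b HT).
    + exact (theory_ICK_mp2 _ _ _ ICK_theory (ICK_ipc _ _ (ipc_S _ _ _))
               (ICK_ipc _ _ (ipc_AndE1 _ _)) (ICK_ipc _ _ (ipc_AndE2 _ _))).
    + now apply theory_Cond_And.
Qed.

(* Only admissible [A] matter; for the others [canonical_R A] is total. *)
Definition canonical_R (A : prime_theory -> Prop) (x y : prime_theory) : Prop :=
  forall c, defines c A -> forall d, x (Cond c d) -> y d.

Lemma mem_Cond A c d (x : prime_theory) :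
  defines c A -> x (Cond c d) <-> forall y, canonical_R A x y -> y d.
Proof.
  intros Hc; split.
  - intros Hcd y Hxy. exact (Hxy c Hc d Hcd).
  - intros H. apply NNPP; intros Hn.
    destruct (lindenbaum (cond_section x c) d
                (cond_section_theory x c (pt_theory x)) Hn) as (P & HP & Pd).
    apply Pd, H. intros c' Hc' e He. apply HP.
    apply (theory_Iff _ _ (pt_theory x) (theory_ICK (pt_theory x) _
             (ICK_congL Gamma _ _ e (defines_unique c' c A Hc' Hc)))), He.
Qed.

Lemma defines_Top : defines Top (fun _ => True).
Proof.
  intros x; split; auto.
  intros _; apply (theory_ICK (pt_theory x)), ICK_imp_refl.
Qed.

Lemma defines_Bot : defines Bot (fun _ => False).
Proof. intros x; split; [intros [] | apply pt_consistent]. Qed.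

Lemma defines_And c d A B :
  defines c A -> defines d B -> defines (And c d) (fun x => A x /\ B x).
Proof.
  intros Hc Hd x. now rewrite (theory_And _ _ (pt_theory x)), (Hc x), (Hd x).
Qed.

Lemma defines_Or c d A B :
  defines c A -> defines d B -> defines (Or c d) (fun x => A x \/ B x).
Proof.
  intros Hc Hd x. rewrite (Hc x), (Hd x). split; [| apply pt_prime].
  intros [Hx | Hx].
  - exact (theory_ICK_mp _ _ (pt_theory x) (ICK_ipc _ _ (ipc_OrI1 c d)) Hx).
  - exact (theory_ICK_mp _ _ (pt_theory x) (ICK_ipc _ _ (ipc_OrI2 c d)) Hx).
Qed.

Lemma defines_Imp c d A B :
  defines c A -> defines d B ->
  defines (Imp c d) (fun x => forall y, pt_incl x y -> A y -> B y).
Proof.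
  intros Hc Hd x. rewrite mem_Imp.
  split; intros H y Hxy Hy; apply Hd, H, Hc; assumption.
Qed.

Lemma defines_Cond c d A B :
  defines c A -> defines d B ->
  defines (Cond c d) (fun x => forall y, canonical_R A x y -> B y).
Proof.
  intros Hc Hd x. rewrite (mem_Cond A c d x Hc).
  split; intros H y Hy; apply Hd, H, Hy.
Qed.

Definition canonical_frame : gframe.
Proof.
  refine {| W := prime_theory; le := pt_incl;
            adm := fun A => exists c, defines c A; R := canonical_R |}.
  - intros x f Hf; exact Hf.
  - intros x y z Hxy Hyz f Hf; auto.
  - exact pt_incl_antisym.
  - intros A [c Hc] x y Hxy Hx; now apply Hc, Hxy, Hc.
  - exists Top; exact defines_Top.
  - exists Bot; exact defines_Bot.
  - intros A B [c Hc] [d Hd]; exists (And c d); now apply defines_And.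
  - intros A B [c Hc] [d Hd]; exists (Or c d); now apply defines_Or.
  - intros A B [c Hc] [d Hd]; exists (Imp c d); now apply defines_Imp.
  - intros A B [c Hc] [d Hd]; exists (Cond c d); now apply defines_Cond.
  - intros A _ x x' y Hxx' Hy. exists y; split; [| intros f Hf; exact Hf].
    intros c Hc d Hd; apply (Hy c Hc d), Hxx', Hd.
Defined.

Lemma defines_interp V s :
  (forall n, defines (s n) (V n)) ->
  forall g, defines (subst s g) (interp canonical_frame V g).
Proof.
  intros Hs g; induction g; simpl.
  - apply Hs.
  - exact defines_Bot.
  - now apply defines_And.
  - now apply defines_Or.
  - now apply defines_Imp.
  - now apply defines_Cond.
Qed.

Lemma canonical_frame_validates : validates canonical_frame Gamma.
Proof.
  intros g Hg V HV x.
  pose (s n := proj1_sig (constructive_indefinite_description _ (HV n))).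
  assert (Hs : forall n, defines (s n) (V n))
    by (intro n; exact (proj2_sig (constructive_indefinite_description _ (HV n)))).
  apply (defines_interp V s Hs g x), (theory_ICK (pt_theory x)).
  now apply ICK_subst, ICK_Gamma.
Qed.

Lemma ICK_complete f :
  (forall F, validates F Gamma -> valid F f) -> ICK Gamma f.
Proof.
  intros Hvalid. apply NNPP; intros Hf.
  destruct (lindenbaum (ICK Gamma) f ICK_theory Hf) as (P & _ & Pf).
  apply Pf. rewrite <- (subst_Var f).
  apply (defines_interp (fun n x => x (Var n)) Var (fun n x => iff_refl _) f P).
  apply Hvalid; [apply canonical_frame_validates |].
  intros n; now exists (Var n).
Qed.

End Completeness.

Theorem theorem4p25 (Gamma : form -> Prop) :
  forall f : form,
    ICK Gamma f <-> (forall F : gframe, validates F Gamma -> valid F f).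
Proof.
  intros f; split.
  - intros Hf F HF. exact (ICK_sound F Gamma f Hf HF).
  - apply ICK_complete.
Qed.
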